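(* In $NOM$, for all finite sequences $\Gamma,\Delta$ of formulas and all formulas $\phi,\psi,\chi$, the following rules are derivable: (i) from $\Gamma,\phi,\phi,\Delta\vdash\psi$ infer $\Gamma,\phi,\Delta\vdash\psi$; (ii) from $\Gamma,\phi,\Delta\vdash\psi$ infer $\Gamma,\phi,\phi,\Delta\vdash\psi$; (iii) from $\Gamma\vdash\phi$ and $\Gamma,\phi,\Delta\vdash\psi$ infer $\Gamma,\Delta\vdash\psi$; (iv) from $\Gamma\vdash\phi$ and $\Gamma,\Delta\vdash\psi$ infer $\Gamma,\phi,\Delta\vdash\psi$; (v) from $\Gamma,\phi,\psi\vdash\phi$, $\Gamma,\phi,\psi,\Delta\vdash\chi$ and $\Gamma,\psi,\phi\vdash\psi$ infer $\Gamma,\psi,\phi,\Delta\vdash\chi$; (vi) $\Gamma,\neg\phi,\phi,\Delta\vdash\psi$ is derivable; (vii) $\Gamma,\phi,\neg\phi,\Delta\vdash\psi$ is derivable; (viii) from $\Gamma,\neg\neg\phi,\Delta\vdash\psi$ infer $\Gamma,\phi,\Delta\vdash\psi$; (ix) from $\Gamma,\phi,\Delta\vdash\psi$ infer $\Gamma,\neg\neg\phi,\Delta\vdash\psi$; (x) from $\Gamma,\phi,\Delta\vdash\psi$ and $\Gamma,\neg\phi,\Delta\vdash\psi$ infer $\Gamma,\Delta\vdash\psi$.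
   Context: The propositional deductive system $NOM$: formulas are built from propositional letters using $\wedge$, $\rightarrow$, $\neg$. Sequents are $\phi_1,\ldots,\phi_n\vdash\psi$ ($n\ge0$) with antecedent a finite ordered sequence; commas denote concatenation. With $\Gamma$ a finite possibly empty sequence of formulas and $\phi,\psi,\chi$ formulas, the rules of $NOM$ are: (assumption) $\Gamma,\phi\vdash\phi$; (cut) $\Gamma\vdash\phi$, $\Gamma,\phi\vdash\psi$ $\Rightarrow$ $\Gamma\vdash\psi$; (paste) $\Gamma\vdash\phi$, $\Gamma\vdash\psi$ $\Rightarrow$ $\Gamma,\phi\vdash\psi$; (compatible exchange) $\Gamma,\phi,\psi\vdash\phi$, $\Gamma,\phi,\psi\vdash\chi$, $\Gamma,\psi,\phi\vdash\psi$ $\Rightarrow$ $\Gamma,\psi,\phi\vdash\chi$; ($\wedge$-intro) $\Gamma\vdash\phi$, $\Gamma\vdash\psi$ $\Rightarrow$ $\Gamma\vdash\phi\wedge\psi$; ($\wedge$-elim) $\Gamma\vdash\phi\wedge\psi$ $\Rightarrow$ $\Gamma\vdash\phi$ and $\Rightarrow$ $\Gamma\vdash\psi$; ($\rightarrow$-intro) $\Gamma,\phi\vdash\psi$ $\Rightarrow$ $\Gamma\vdash\phi\rightarrow\psi$; ($\rightarrow$-elim) $\Gamma\vdash\phi\rightarrow\psi$ $\Rightarrow$ $\Gamma,\phi\vdash\psi$; (excluded middle) $\Gamma,\phi\vdash\psi$, $\Gamma,\neg\phi\vdash\psi$ $\Rightarrow$ $\Gamma\vdash\psi$; (explosion) $\Gamma\vdash\neg\phi$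 $\Rightarrow$ $\Gamma,\phi\vdash\psi$. A rule schema is derivable if in every instance its conclusion can be derived from its premises using these rules. *)

From Stdlib Require Import List.
Import ListNotations.

Inductive form : Type :=
| Var : nat -> form
| And : form -> form -> form
| Imp : form -> form -> form
| Neg : form -> form.

Definition sequent : Type := (list form * form)%type.

(* [derives P s]: the sequent s can be derived in NOM using the sequents
   satisfying P as additional premises (leaves). With P = no premises this is
   plain derivability in NOM. *)
Inductive derives (P : sequent -> Prop) : sequent -> Prop :=
| d_premise : forall s, P s -> derives P s
| d_assum : forall G a, derives P (G ++ [a], a)
| d_cut : forall G a b,
    derives P (G, a) -> derives P (G ++ [a], b) -> derives P (G, b)
| d_paste : forall G a b,
    derives P (G, a) -> derives P (G, b) -> derives P (G ++ [a], b)
| d_cexch : forall G a b c,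
    derives P (G ++ [a; b], a) -> derives P (G ++ [a; b], c) ->
    derives P (G ++ [b; a], b) -> derives P (G ++ [b; a], c)
| d_andI : forall G a b,
    derives P (G, a) -> derives P (G, b) -> derives P (G, And a b)
| d_andE1 : forall G a b, derives P (G, And a b) -> derives P (G, a)
| d_andE2 : forall G a b, derives P (G, And a b) -> derives P (G, b)
| d_impI : forall G a b, derives P (G ++ [a], b) -> derives P (G, Imp a b)
| d_impE : forall G a b, derives P (G, Imp a b) -> derives P (G ++ [a], b)
| d_em : forall G a b,
    derives P (G ++ [a], b) -> derives P (G ++ [Neg a], b) -> derives P (G, b)
| d_explosion : forall G a b, derives P (G, Neg a) -> derives P (G ++ [a], b).

Definition derivable_rule (prems : list sequent) (concl : sequent) : Prop :=
  derives (fun s => In s prems) concl.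

From Stdlib Require Import List.
Import ListNotations.

(* Every rule of NOM acts at the right end of the antecedent.  A trailing
   context D is moved into the succedent as the iterated implication
   D => p by ->-intro, and back by ->-elim, so each rule transfers to
   the same rule followed by D.  For the double-negation rules, phi and
   ~~phi are interderivable over any context, and compatible exchange
   lets one replace a hypothesis by an interderivable one. *)

Fixpoint imps (D : list form) (p : form) : form :=
  match D with
  | [] => p
  | d :: D' => Imp d (imps D' p)
  end.

Section Derivations.

Variable P : sequent -> Prop.

Lemma derives_imps (G D : list form) (p : form) :
  derives P (G ++ D, p) <-> derives P (G, imps D p).
Proof.
  revert G; induction D as [|d D IH]; intros G; simpl.
  - rewrite app_nil_r; tauto.
  - replace (G ++ d :: D) with ((G ++ [d]) ++ D) by (rewrite <- app_assoc; reflexivity).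
    rewrite IH; split.
    + apply d_impI.
    + apply d_impE.
Qed.

Lemma derives_lift_suffix (G l l' D : list form) (p : form) :
  (forall q, derives P (G ++ l, q) -> derives P (G ++ l', q)) ->
  derives P (G ++ l ++ D, p) -> derives P (G ++ l' ++ D, p).
Proof.
  intros Hrule H.
  rewrite app_assoc, derives_imps in *.
  apply Hrule, H.
Qed.

Lemma app_snoc2 {A : Type} (G : list A) (a b : A) : G ++ [a; b] = (G ++ [a]) ++ [b].
Proof. rewrite <- app_assoc; reflexivity. Qed.

Lemma derives_contract (G D : list form) (a p : form) :
  derives P (G ++ [a; a] ++ D, p) -> derives P (G ++ [a] ++ D, p).
Proof.
  apply derives_lift_suffix; intros q H.
  apply (d_cut _ _ a); [apply d_assum | now rewrite <- app_snoc2].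
Qed.

Lemma derives_duplicate (G D : list form) (a p : form) :
  derives P (G ++ [a] ++ D, p) -> derives P (G ++ [a; a] ++ D, p).
Proof.
  apply derives_lift_suffix; intros q H.
  rewrite app_snoc2; apply d_paste; [apply d_assum | exact H].
Qed.

Lemma derives_cut_mid (G D : list form) (a p : form) :
  derives P (G, a) -> derives P (G ++ [a] ++ D, p) -> derives P (G ++ D, p).
Proof.
  intros Ha; change (G ++ D) with (G ++ [] ++ D).
  apply derives_lift_suffix; intros q H.
  rewrite app_nil_r; exact (d_cut _ _ _ _ Ha H).
Qed.

Lemma derives_paste_mid (G D : list form) (a p : form) :
  derives P (G, a) -> derives P (G ++ D, p) -> derives P (G ++ [a] ++ D, p).
Proof.
  intros Ha; change (G ++ D) with (G ++ [] ++ D).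
  apply derives_lift_suffix; intros q H.
  rewrite app_nil_r in H; exact (d_paste _ _ _ _ Ha H).
Qed.

Lemma derives_cexch_mid (G D : list form) (a b c : form) :
  derives P (G ++ [a; b], a) -> derives P (G ++ [a; b] ++ D, c) ->
  derives P (G ++ [b; a], b) -> derives P (G ++ [b; a] ++ D, c).
Proof.
  intros Hab H Hba; revert H.
  apply derives_lift_suffix; intros q H.
  exact (d_cexch _ _ _ _ _ Hab H Hba).
Qed.

Lemma derives_em_mid (G D : list form) (a p : form) :
  derives P (G ++ [a] ++ D, p) -> derives P (G ++ [Neg a] ++ D, p) ->
  derives P (G ++ D, p).
Proof.
  rewrite !app_assoc; intros Ha Hna.
  apply derives_imps, (d_em _ _ a); rewrite <- derives_imps; assumption.
Qed.

Lemma derives_nn_elim (G : list form) (a : form) :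
  derives P (G ++ [Neg (Neg a)], a).
Proof.
  apply (d_em _ _ a).
  - apply d_assum.
  - apply d_explosion, d_assum.
Qed.

Lemma derives_nn_intro (G : list form) (a : form) :
  derives P (G ++ [a], Neg (Neg a)).
Proof.
  apply d_impE, (d_em _ _ (Neg a)); apply d_impI.
  - apply d_explosion, d_assum.
  - apply d_paste; [apply derives_nn_elim | apply d_assum].
Qed.

Lemma derives_neg_hyp_absurd (G D : list form) (a p : form) :
  derives P (G ++ [Neg a; a] ++ D, p).
Proof.
  rewrite app_assoc, derives_imps, app_snoc2.
  apply d_explosion, d_assum.
Qed.

Lemma derives_hyp_neg_absurd (G D : list form) (a p : form) :
  derives P (G ++ [a; Neg a] ++ D, p).
Proof.
  rewrite app_assoc, derives_imps, app_snoc2.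
  apply d_explosion, derives_nn_intro.
Qed.

(* Cut in [a], then move it before [b] by compatible exchange; each
   exchange premise is a paste of one of the two interderivability facts. *)
Lemma derives_hyp_replace (G : list form) (a b p : form) :
  derives P (G ++ [b], a) -> derives P (G ++ [a], b) ->
  derives P (G ++ [a], p) -> derives P (G ++ [b], p).
Proof.
  intros Hba Hab H.
  apply (d_cut _ _ a); [exact Hba |].
  rewrite <- app_snoc2; apply d_cexch; rewrite app_snoc2; apply d_paste;
    solve [assumption | apply d_assum].
Qed.

Lemma derives_nn_hyp_elim (G D : list form) (a p : form) :
  derives P (G ++ [Neg (Neg a)] ++ D, p) -> derives P (G ++ [a] ++ D, p).
Proof.
  apply derives_lift_suffix; intros q.
  apply derives_hyp_replace; [apply derives_nn_intro | apply derives_nn_elim].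
Qed.

Lemma derives_nn_hyp_intro (G D : list form) (a p : form) :
  derives P (G ++ [a] ++ D, p) -> derives P (G ++ [Neg (Neg a)] ++ D, p).
Proof.
  apply derives_lift_suffix; intros q.
  apply derives_hyp_replace; [apply derives_nn_elim | apply derives_nn_intro].
Qed.

End Derivations.

Theorem theorem2p6 :
  forall (G D : list form) (phi psi chi : form),
    (* (i) contraction *)
    derivable_rule [(G ++ [phi; phi] ++ D, psi)] (G ++ [phi] ++ D, psi) /\
    (* (ii) duplication *)
    derivable_rule [(G ++ [phi] ++ D, psi)] (G ++ [phi; phi] ++ D, psi) /\
    (* (iii) generalized cut *)
    derivable_rule [(G, phi); (G ++ [phi] ++ D, psi)] (G ++ D, psi) /\
    (* (iv) generalized paste *)
    derivable_rule [(G, phi); (G ++ D, psi)] (G ++ [phi] ++ D, psi) /\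
    (* (v) generalized compatible exchange *)
    derivable_rule [(G ++ [phi; psi], phi); (G ++ [phi; psi] ++ D, chi);
                    (G ++ [psi; phi], psi)]
                   (G ++ [psi; phi] ++ D, chi) /\
    (* (vi) *)
    derivable_rule [] (G ++ [Neg phi; phi] ++ D, psi) /\
    (* (vii) *)
    derivable_rule [] (G ++ [phi; Neg phi] ++ D, psi) /\
    (* (viii) *)
    derivable_rule [(G ++ [Neg (Neg phi)] ++ D, psi)] (G ++ [phi] ++ D, psi) /\
    (* (ix) *)
    derivable_rule [(G ++ [phi] ++ D, psi)] (G ++ [Neg (Neg phi)] ++ D, psi) /\
    (* (x) generalized excluded middle *)
    derivable_rule [(G ++ [phi] ++ D, psi); (G ++ [Neg phi] ++ D, psi)]
                   (G ++ D, psi).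
Proof.
  intros G D phi psi chi; unfold derivable_rule.
  repeat split;
    [ apply derives_contract
    | apply derives_duplicate
    | apply derives_cut_mid with phi
    | apply derives_paste_mid
    | apply derives_cexch_mid
    | apply derives_neg_hyp_absurd
    | apply derives_hyp_neg_absurd
    | apply derives_nn_hyp_elim
    | apply derives_nn_hyp_intro
    | apply derives_em_mid with phi ];
    apply d_premise; simpl; tauto.
Qed.
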